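(* For every nested marble transducer $T$ (of any level $k\ge0$), the domain $\mathrm{dom}(f_T)$ of the transduction it recognizes is a regular language.
   Context: Nested marble transducers (NMT). For an input $u\in\Sigma^*$ of length $n$, machines read $\vdash u\dashv$, with positions $0,\dots,n+1$: position $0$ carries $\vdash$ and position $n+1$ carries $\dashv$. Level 0. A $(0,\Sigma,\Gamma)$-NMT (simple transducer) is $T=(A,\mu)$, where $A=(Q,q_0,F,\delta)$ is a DFA over $\Sigma\cup\{\vdash,\dashv\}$ and $\mu:F\to\Gamma^{\le1}$. Its operational semantics is $f^{op}_T(q,u)=(\mu(q_f),q_f)$ if $A$ goes from $q$ to some $q_f\in F$ reading $\vdash u\dashv$, undefined otherwise. Level $k\ge1$. A $(k,\Sigma,\Gamma)$-NMT is a tuple $T=(C,c_0,Q,q_0,F,\delta,\delta_{call},\delta_{ret},\mu,T')$ where: - $C$ is a finite set of marble colours and $c_0\in C$; - $Q$ is a finite set of states, $q_0$ is initial and $F\subseteq Q$ is accepting; - the assistant $T'$ is a $(k-1,\Sigma\times C,\Gamma)$-NMT with state set $Q'$ and accepting set $F'$; - $\delta:Q\times(\Sigma\cup\{\dashv\})\times C\rightharpoonup(C\cup\{\bot\})\times Q$; - $\delta_{call}:Q\times C\to Q'$ and $\delta_{ret}:Q\times C\times F'\to Q$; - $\mu:\mathrm{dom}(\delta)\to\Gamma^*$. A configuration on $u$ is $(q,i,v)$ with $q\in Q$, $0\le i\le n+1$ and $v\in C^{n+2-i}$, the marbles on positions $i,\dots,n+1$. Writing $v=cv'$ and $\sigma$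 for the letter at position $i$, the steps are: 1. If $1\le i\le n+1$ and $\delta(q,\sigma,c)=(c',q')$, then $(q,i,cv')\to(q',i-1,c'cv')$ with output $\mu(q,\sigma,c)$ (drop a marble, move left). 2. If $1\le i\le n$ and $\delta(q,\sigma,c)=(\bot,q')$, then $(q,i,cv')\to(q',i+1,v')$ with output $\mu(q,\sigma,c)$ (lift the marble, move right). 3. If $i=0$ and $f^{op}_{T'}(\delta_{call}(q,c),\tilde u)=(x,p)$, then $(q,0,cv')\to(\delta_{ret}(q,c,p),1,v')$ with output $x$. Here $\tilde u$ is $\vdash u\dashv$ annotated position-wise with the current marbles $cv'$. $f^{op}_T(q,u)=(x_1\cdots x_m,q_f)$ if the steps from $(q,n+1,c_0)$, with outputs $x_1,\dots,x_m$, reach a configuration with state $q_f\in F$, all earlier configurations having non-accepting states; otherwise it is undefined. At every level $k\ge0$, $f_T(u)$ is the first component of $f^{op}_T(q_0,u)$, and $k$ is the level of $T$. We write $k$-NMT for an NMT of level $k$. *)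

From mathcomp Require Import all_boot.
Set Implicit Arguments. Unset Strict Implicit. Unset Printing Implicit Defensive.

Inductive lett (Sigma : Type) : Type :=
| LM              (* |- , left endmarker  *)
| RM              (* -| , right endmarker *)
| Sym of Sigma.
Arguments LM {Sigma}. Arguments RM {Sigma}. Arguments Sym {Sigma}.

(* Finite sets of states / colours are represented by ordinals 'I_n.
   [nmt Gamma k Sigma nq] is the type of (k, Sigma, Gamma)-NMTs whose state set is 'I_nq.
   - Level 0: a DFA (q0, F, delta) over Sigma + {|-,-|} with output mu (only used on F),
     mu : Q -> Gamma^{<=1} encoded by option Gamma.
   - Level k+1: colours 'I_nc with c0, states 'I_nq with q0, F, assistant A, a level-k NMT
     over Sigma * 'I_nc with state set 'I_nq';
     delta q a c : partial (None = undefined); a : option Sigma with None = -| ;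
     result (Some c', q') = drop marble c', (None, q') = lift (bottom);
     call : Q -> C -> Q'; ret : Q -> C -> Q' -> Q (only used on F');
     mu : output, only used where delta is defined. *)
Inductive nmt (Gamma : Type) : nat -> Type -> nat -> Type :=
| Lvl0 (Sigma : Type) (nq : nat) (q0 : 'I_nq) (F : pred 'I_nq)
    (delta : 'I_nq -> lett Sigma -> 'I_nq) (mu : 'I_nq -> option Gamma) :
    nmt Gamma 0 Sigma nq
| LvlS (k : nat) (Sigma : Type) (nq nc nq' : nat) (c0 : 'I_nc) (q0 : 'I_nq)
    (F : pred 'I_nq) (A : nmt Gamma k (Sigma * 'I_nc)%type nq')
    (delta : 'I_nq -> option Sigma -> 'I_nc -> option (option 'I_nc * 'I_nq))
    (call : 'I_nq -> 'I_nc -> 'I_nq')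
    (ret : 'I_nq -> 'I_nc -> 'I_nq' -> 'I_nq)
    (mu : 'I_nq -> option Sigma -> 'I_nc -> seq Gamma) :
    nmt Gamma k.+1 Sigma nq.

Section Marble.
Variables (Sigma Gamma : Type) (nq nc : nat) (c0 : 'I_nc) (F : pred 'I_nq)
  (delta : 'I_nq -> option Sigma -> 'I_nc -> option (option 'I_nc * 'I_nq))
  (mu : 'I_nq -> option Sigma -> 'I_nc -> seq Gamma)
  (* sub q c w x q'' : calling the assistant in state call q c on the annotated
     word w yields (x, p) and q'' = ret q c p *)
  (sub : 'I_nq -> 'I_nc -> seq (Sigma * 'I_nc) -> seq Gamma -> 'I_nq -> Prop).

(* configuration (q, i, v): v = marbles on positions i, ..., n+1 *)
Definition config := ('I_nq * nat * seq 'I_nc)%type.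

(* letter at position i, 1 <= i <= n+1: Some u_i for i <= n, None (= -|) for i = n+1 *)
Definition letter_at (u : seq Sigma) (i : nat) : option Sigma := ohead (drop i.-1 u).

Inductive step (u : seq Sigma) : config -> seq Gamma -> config -> Prop :=
| StepDrop q i c v c' q' :
    1 <= i <= size u + 1 ->
    delta q (letter_at u i) c = Some (Some c', q') ->
    step u (q, i, c :: v) (mu q (letter_at u i) c) (q', i.-1, c' :: c :: v)
| StepLift q i c v q' :
    1 <= i <= size u ->
    delta q (letter_at u i) c = Some (None, q') ->
    step u (q, i, c :: v) (mu q (letter_at u i) c) (q', i.+1, v)
| StepCall q c v x q'' :
    (* annotated word: u with the marbles on positions 1..n *)
    sub q c (zip u (take (size u) v)) x q'' ->
    step u (q, 0, c :: v) x (q'', 1, v).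

Inductive exec (u : seq Sigma) : config -> seq Gamma -> config -> Prop :=
| ExecStop (cf : config) : F cf.1.1 -> exec u cf [::] cf
| ExecStep (cf cf' cf'' : config) x y :
    ~~ F cf.1.1 -> step u cf x cf' -> exec u cf' y cf'' -> exec u cf (x ++ y) cf''.

Definition runK (q : 'I_nq) (u : seq Sigma) (x : seq Gamma) (qf : 'I_nq) : Prop :=
  exists (i : nat) (v : seq 'I_nc), exec u (q, size u + 1, [:: c0]) x (qf, i, v).
End Marble.

(* operational semantics: opsem T q u x qf  <->  f^op_T(q,u) = (x, qf) *)
Fixpoint opsem (Gamma : Type) (k : nat) (Sigma : Type) (nq : nat)
    (T : nmt Gamma k Sigma nq) {struct T} :
    'I_nq -> seq Sigma -> seq Gamma -> 'I_nq -> Prop :=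
  match T in nmt _ k0 Sigma0 nq0
    return 'I_nq0 -> seq Sigma0 -> seq Gamma -> 'I_nq0 -> Prop with
  | Lvl0 _ _ _ F delta mu => fun q u x qf =>
      [/\ foldl delta q (LM :: rcons (map Sym u) RM) = qf, F qf &
          x = if mu qf is Some g then [:: g] else [::]]
  | LvlS _ _ _ _ _ c0 _ F A delta call ret mu => fun q u x qf =>
      runK c0 F delta mu
        (fun q1 c w y q2 => exists p, opsem A (call q1 c) w y p /\ q2 = ret q1 c p)
        q u x qf
  end.

Definition init (Gamma : Type) (k : nat) (Sigma : Type) (nq : nat)
    (T : nmt Gamma k Sigma nq) : 'I_nq :=
  match T with Lvl0 _ _ q0 _ _ _ => q0 | LvlS _ _ _ _ _ _ q0 _ _ _ _ _ _ => q0 end.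

Definition nmt_dom (Gamma : Type) (k : nat) (Sigma : Type) (nq : nat)
    (T : nmt Gamma k Sigma nq) (u : seq Sigma) : Prop :=
  exists (x : seq Gamma) (qf : 'I_nq), opsem T (init T) u x qf.

Definition regular (Sigma : finType) (L : seq Sigma -> Prop) : Prop :=
  exists (n : nat) (q0 : 'I_n) (Acc : pred 'I_n) (d : 'I_n -> Sigma -> 'I_n),
    forall w, L w <-> Acc (foldl d q0 w).

From mathcomp Require Import all_boot.
From Stdlib Require Import ClassicalEpsilon.
Set Implicit Arguments. Unset Strict Implicit. Unset Printing Implicit Defensive.

(* The domain is regular level by level: if the assistant's possible return
   states depend only on the state of a DFA run over the annotated input, so do
   those of the marble transducer.  Reading the input from left to right, the
   DFA records the set of "behaviours" at the current position j: entering j in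
   state q with marble c on it, the marble run either stops in an accepting
   state or eventually lifts that marble and moves right in some state q'.
   The marbles right of j are unknown at that moment, but all that matters of
   them is their effect on the assistant's DFA, a map [S -> S] ranging over a
   finite set, which is therefore made part of the behaviour.  Behaviours at j
   are determined by those at j-1 and the letter at j, and the run from the
   initial configuration at the right endmarker is one such behaviour. *)

Definition classicb (P : Prop) : bool :=
  if excluded_middle_informative P then true else false.

Lemma classicbP (P : Prop) : reflect P (classicb P).
Proof. by rewrite /classicb; case: excluded_middle_informative => ?; constructor. Qed.

Definition dfa_recognizable (A Q : Type) (R : Q -> seq A -> Q -> Prop) : Prop :=
  exists (S : finType) (s : S) (d : S -> A -> S) (G : Q -> S -> Q -> Prop),
    forall q w q', R q w q' <-> G q (foldl d s w) q'.

Lemma regular_foldl (A S : finType) (s : S) (d : S -> A -> S) (P : S -> Prop)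
    (L : seq A -> Prop) :
  (forall w, L w <-> P (foldl d s w)) -> regular L.
Proof.
move=> LP; exists #|S|, (enum_rank s), (fun i => classicb (P (enum_val i))).
exists (fun i a => enum_rank (d (enum_val i) a)) => w.
have foldl_rank s1 : foldl (fun i a => enum_rank (d (enum_val i) a)) (enum_rank s1) w
    = enum_rank (foldl d s1 w).
  by elim: w s1 => [|a w IHw] s1 //=; rewrite enum_rankK IHw.
by rewrite foldl_rank enum_rankK LP; split=> /classicbP.
Qed.

Lemma dfa_recognizable_endmarked (A : Type) (nq : nat) (F : pred 'I_nq)
    (delta : 'I_nq -> lett A -> 'I_nq) :
  dfa_recognizable
    (fun q u qf => foldl delta q (LM :: rcons (map Sym u) RM) = qf /\ F qf).
Proof.
pose dT (f : {ffun 'I_nq -> 'I_nq}) a := [ffun q => delta (f q) (Sym a)].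
exists {ffun 'I_nq -> 'I_nq}, [ffun q => delta q LM], dT.
exists (fun q (f : {ffun _ -> _}) qf => delta (f q) RM = qf /\ F qf) => q u qf.
have foldl_dT f : foldl dT f u q = foldl delta (f q) (map Sym u).
  by elim: u f => [|a u IHu] f //=; rewrite IHu ffunE.
by rewrite /= foldl_dT ffunE -cats1 foldl_cat.
Qed.

Lemma letter_at_drop (A : Type) (u : seq A) j : j < size u ->
  exists x, letter_at u j.+1 = Some x /\ drop j u = x :: drop j.+1 u.
Proof.
rewrite /letter_at /=; elim: u j => [|y u IHu] [|j] //= ltju.
  by exists y; rewrite drop0.
exact: IHu.
Qed.

Lemma letter_at_size (A : Type) (u : seq A) j x : letter_at u j.+1 = Some x -> j < size u.
Proof. by rewrite /letter_at /= ltnNge; apply: contraPN => /drop_oversize ->. Qed.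

Lemma letter_at_end (A : Type) (u : seq A) : letter_at u (size u + 1) = None.
Proof. by rewrite /letter_at addn1 /= drop_size. Qed.

Lemma zip_nil (A B : Type) (t : seq B) : zip ([::] : seq A) t = [::].
Proof. by case: t. Qed.

Section MarbleRecognizable.
Variables (Sigma Gamma : Type) (nq nc : nat) (c0 : 'I_nc) (F : pred 'I_nq)
  (delta : 'I_nq -> option Sigma -> 'I_nc -> option (option 'I_nc * 'I_nq))
  (mu : 'I_nq -> option Sigma -> 'I_nc -> seq Gamma)
  (sub : 'I_nq -> 'I_nc -> seq (Sigma * 'I_nc) -> seq Gamma -> 'I_nq -> Prop).
Variables (S : finType) (s0 : S) (dS : S -> Sigma * 'I_nc -> S)
  (callG : 'I_nq -> 'I_nc -> S -> 'I_nq -> Prop).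
Hypothesis sub_dfa : forall q c w q',
  (exists y, sub q c w y q') <-> callG q c (foldl dS s0 w) q'.

Notation Q := 'I_nq.
Notation C := 'I_nc.
Notation summary := {ffun S -> S}.
Notation step := (step delta mu sub).

Definition cons_summary (a : option Sigma) (c : C) (t : summary) : summary :=
  if a is Some x then [ffun s => t (dS s (x, c))] else t.

Definition summary_at (u : seq Sigma) (i : nat) (v : seq C) : summary :=
  [ffun s => foldl dS s (zip (drop i u) (take (size u - i) v))].

(* [(q, c, t, r)]: entering a position in state [q] with marble [c] on it and
   [t] summarising the annotated input to its right, the run stops in state
   [qf] ([r = inr qf]) or lifts the marble and moves right in state [q']
   ([r = inl q']). *)
Definition behaviour := (Q * C * summary * (Q + Q))%type.

(* Behaviours at a position with letter [a], given the set [B] of behaviours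
   at the position to its left. *)
Inductive behaves (B : {set behaviour}) (a : option Sigma) (c : C) (t : summary) :
    Q -> Q + Q -> Prop :=
| BehStop q : F q -> behaves B a c t q (inr q)
| BehLift q x q' : ~~ F q -> a = Some x -> delta q a c = Some (None, q') ->
    behaves B a c t q (inl q')
| BehDropStop q c' q' qf : ~~ F q -> delta q a c = Some (Some c', q') ->
    (q', c', cons_summary a c t, inr qf) \in B -> behaves B a c t q (inr qf)
| BehDropReturn q c' q' q'' r : ~~ F q -> delta q a c = Some (Some c', q') ->
    (q', c', cons_summary a c t, inl q'') \in B -> behaves B a c t q'' r ->
    behaves B a c t q r.

Definition behaves_left (b : behaviour) : Prop :=
  let: (q, c, t, r) := b in
  (F q /\ r = inr q) \/ (~~ F q /\ exists q', callG q c (t s0) q' /\ r = inl q').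

Definition behs0 : {set behaviour} := [set b | classicb (behaves_left b)].

Definition behs_next (B : {set behaviour}) (x : Sigma) : {set behaviour} :=
  [set b | classicb (let: (q, c, t, r) := b in behaves B (Some x) c t q r)].

Definition behaves_at (u : seq Sigma) (i : nat) (c : C) (t : summary) (q : Q)
    (r : Q + Q) : Prop :=
  if i is j.+1 then behaves (foldl behs_next behs0 (take j u)) (letter_at u i) c t q r
  else behaves_left (q, c, t, r).

Lemma summary_at_cons u j c v : j < size u + 1 ->
  summary_at u j (c :: v) = cons_summary (letter_at u j.+1) c (summary_at u j.+1 v).
Proof.
rewrite addn1 ltnS leq_eqVlt => /orP [/eqP -> | ltju].
  rewrite -addn1 letter_at_end; apply/ffunP => s.
  by rewrite !ffunE drop_size drop_oversize ?leq_addr // !zip_nil.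
have [x [-> dropju]] := letter_at_drop ltju.
by apply/ffunP => s; rewrite !ffunE dropju -(subnSK ltju).
Qed.

Lemma summary_at_end u : summary_at u (size u + 1) [::] = [ffun s => s].
Proof. by apply/ffunP => s; rewrite !ffunE drop_oversize ?leq_addr // zip_nil. Qed.

Lemma mem_behs u j c t q r : j <= size u ->
  ((q, c, t, r) \in foldl behs_next behs0 (take j u)) <-> behaves_at u j c t q r.
Proof.
case: j => [|j] ltju; first by rewrite take0 inE; split=> /classicbP.
have [x [letx dropju]] := letter_at_drop ltju.
have -> : take j.+1 u = rcons (take j u) x.
  by rewrite (take_nth x ltju) (drop_nth x ltju) in dropju *; case: dropju => ->.
by rewrite foldl_rcons inE /= letx; split=> /classicbP.
Qed.

Inductive runs_to (u : seq Sigma) : nat -> config nq nc -> Q -> Prop :=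
| RunsStop cf : F cf.1.1 -> runs_to u 0 cf cf.1.1
| RunsStep m cf cf' x qf : ~~ F cf.1.1 -> step u cf x cf' ->
    runs_to u m cf' qf -> runs_to u m.+1 cf qf.

Lemma exec_runs_to u cf x cf' :
  exec F delta mu sub u cf x cf' -> exists m, runs_to u m cf cf'.1.1.
Proof.
elim=> [cf1 Fcf1 | cf1 cf2 cf3 x1 y nFcf1 stp _ [m runm]]; first by exists 0; exact: RunsStop.
by exists m.+1; exact: RunsStep stp runm.
Qed.

Lemma runs_to_exec u m cf qf :
  runs_to u m cf qf -> exists x i v, exec F delta mu sub u cf x (qf, i, v).
Proof.
elim=> [[[q i] v] Fq | m1 cf1 cf2 x1 qf1 nFcf1 stp _ [y [i [v ex]]]].
  by exists [::], i, v; exact: ExecStop.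
by exists (x1 ++ y), i, v; exact: ExecStep stp ex.
Qed.

Lemma runs_toE u m cf qf : runs_to u m cf qf ->
  (m = 0 /\ F cf.1.1 /\ qf = cf.1.1) \/
  exists m' cf' x, [/\ m = m'.+1, ~~ F cf.1.1, step u cf x cf' & runs_to u m' cf' qf].
Proof.
by case=> [cf1 Fcf1 | m1 cf1 cf2 x1 qf1 nFcf1 stp runm]; [left | right; exists m1, cf2, x1].
Qed.

Lemma stepE u q i c v x cf' : step u (q, i, c :: v) x cf' ->
  [\/ exists c' q', [/\ 1 <= i <= size u + 1,
                       delta q (letter_at u i) c = Some (Some c', q')
                     & cf' = (q', i.-1, c' :: c :: v)],
      exists q', [/\ 1 <= i <= size u, delta q (letter_at u i) c = Some (None, q')
                   & cf' = (q', i.+1, v)]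
    | i = 0 /\ exists q'', sub q c (zip u (take (size u) v)) x q'' /\ cf' = (q'', 1, v)].
Proof.
move=> stp; inversion stp; subst.
- by apply: Or31; exists c', q'.
- by apply: Or32; exists q'.
- by apply: Or33; split=> //; exists q''.
Qed.

Definition run_decomposes u i m q c v qf : Prop :=
  behaves_at u i c (summary_at u i v) q (inr qf) \/
  exists q' m', [/\ m' < m, behaves_at u i c (summary_at u i v) q (inl q')
                  & runs_to u m' (q', i.+1, v) qf].

Lemma run_decomposes0 u m q c v qf :
  runs_to u m (q, 0, c :: v) qf -> run_decomposes u 0 m q c v qf.
Proof.
case/runs_toE=> [[_ [Fq ->]] | [m' [cf' [x [-> nFq stp runm']]]]]; first by left; left.
case/stepE: stp runm' => [[c' [q' [/andP[]//]]] | [q' [/andP[]//]] | [_ [q'' [subx ->]]]].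
move=> runm'; right; exists q'', m'; split=> //; right; split=> //.
by exists q''; split=> //; rewrite ffunE drop0 subn0; apply/sub_dfa; exists x.
Qed.

Lemma run_decomposesS u j m q c v qf : j < size u + 1 ->
  (forall m q c v qf, runs_to u m (q, j, c :: v) qf -> run_decomposes u j m q c v qf) ->
  runs_to u m (q, j.+1, c :: v) qf -> run_decomposes u j.+1 m q c v qf.
Proof.
move=> ltju IHj; have leju : j <= size u by move: ltju; rewrite addn1 ltnS.
elim/ltn_ind: m q => m IHm q.
case/runs_toE=> [[_ [Fq ->]] | [m' [cf' [x [em nFq stp runm']]]]]; first by left; exact: BehStop.
subst m; case/stepE: stp runm' => [[c' [q' [_ dq ->]]] | [q' [ltju' dq ->]] | [//]] runm'.
- rewrite /run_decomposes /behaves_at.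
  have [Bq' | [q'' [m'' [ltm'' Bq' runm'']]]] := IHj _ _ _ _ _ runm';
    rewrite summary_at_cons // in Bq'; move/(mem_behs _ _ _ _ leju): Bq' => Bq'.
    by left; exact: BehDropStop nFq dq Bq'.
  have ltm''m : m'' < m'.+1 := ltn_trans ltm'' (ltnSn m').
  have [Bq'' | [q3 [m3 [ltm3 Bq3 runm3]]]] := IHm _ ltm''m _ runm''.
    by left; exact: BehDropReturn nFq dq Bq' Bq''.
  right; exists q3, m3; split=> //; first exact: ltn_trans ltm3 ltm''m.
  exact: BehDropReturn nFq dq Bq' Bq3.
- have [y [lety _]] := letter_at_drop (ltju' : j < size u).
  by right; exists q', m'; split=> //; exact: BehLift nFq lety dq.
Qed.

Lemma run_decomposesP u i m q c v qf : i <= size u + 1 ->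
  runs_to u m (q, i, c :: v) qf -> run_decomposes u i m q c v qf.
Proof.
elim: i m q c v qf => [|j IHj] m q c v qf leiu; first exact: run_decomposes0.
by apply: (run_decomposesS leiu) => m' q' c' v' qf'; exact: IHj (ltnW leiu).
Qed.

Definition reaches u (cf : config nq nc) qf : Prop := exists m, runs_to u m cf qf.

Lemma reaches_stop u (cf : config nq nc) : F cf.1.1 -> reaches u cf cf.1.1.
Proof. by exists 0; exact: RunsStop. Qed.

Lemma reaches_step u cf x cf' qf :
  ~~ F cf.1.1 -> step u cf x cf' -> reaches u cf' qf -> reaches u cf qf.
Proof. by move=> nFcf stp [m runm]; exists m.+1; exact: RunsStep stp runm. Qed.

Definition behaviour_realized u i c v q (r : Q + Q) : Prop :=
  match r with
  | inr qf => reaches u (q, i, c :: v) qf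
  | inl q' => forall qf, reaches u (q', i.+1, v) qf -> reaches u (q, i, c :: v) qf
  end.

Lemma behaviour_realized0 u c v q r :
  behaves_at u 0 c (summary_at u 0 v) q r -> behaviour_realized u 0 c v q r.
Proof.
case=> [[Fq ->] | [nFq [q' [callq' ->]]]]; first exact: (@reaches_stop u (q, 0, c :: v)).
rewrite ffunE drop0 subn0 in callq'; have [x subx] := (sub_dfa _ _ _ _).2 callq'.
by move=> qf; apply: (@reaches_step u (q, 0, c :: v)) => //; exact: StepCall subx.
Qed.

Lemma behaviour_realizedS u j c v q r : j < size u + 1 ->
  (forall c v q r, behaves_at u j c (summary_at u j v) q r -> behaviour_realized u j c v q r) ->
  behaves_at u j.+1 c (summary_at u j.+1 v) q r -> behaviour_realized u j.+1 c v q r.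
Proof.
move=> ltju IHj; have leju : j <= size u by move: ltju; rewrite addn1 ltnS.
have drop_step q1 c' q' : ~~ F q1 -> delta q1 (letter_at u j.+1) c = Some (Some c', q') ->
    forall qf, reaches u (q', j, c' :: c :: v) qf -> reaches u (q1, j.+1, c :: v) qf.
  move=> nFq1 dq1 qf; apply: (@reaches_step u (q1, j.+1, c :: v)) => //.
  by apply: StepDrop => //; rewrite ltju.
elim=> [q1 Fq1 | q1 x q' nFq1 letx dq1 | q1 c' q' qf nFq1 dq1 Bq'
       | q1 c' q' q'' r1 nFq1 dq1 Bq' _ IHr].
- exact: (@reaches_stop u (q1, j.+1, c :: v)).
- move=> qf; apply: (@reaches_step u (q1, j.+1, c :: v)) => //.
  by apply: StepLift => //; exact: letter_at_size letx.
- move/(mem_behs _ _ _ _ leju): Bq'; rewrite -summary_at_cons // => /IHj.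
  exact: drop_step.
- move/(mem_behs _ _ _ _ leju): Bq'; rewrite -summary_at_cons // => /IHj Rq'.
  case: r1 IHr => [q3 | qf] IHr /=.
    by move=> qf /IHr /Rq'; exact: drop_step.
  exact/(drop_step _ _ _ nFq1 dq1)/Rq'.
Qed.

Lemma behaviour_realizedP u i c v q r : i <= size u + 1 ->
  behaves_at u i c (summary_at u i v) q r -> behaviour_realized u i c v q r.
Proof.
elim: i c v q r => [|j IHj] c v q r leiu; first exact: behaviour_realized0.
by apply: (behaviour_realizedS leiu) => c' v' q' r'; exact: IHj (ltnW leiu).
Qed.

Lemma behaves_end_stops B c t q r : behaves B None c t q r -> exists qf, r = inr qf.
Proof. by elim=> // [q1 _ | q1 c' q' qf _ _ _]; eexists. Qed.

Lemma runK_recognizable :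
  dfa_recognizable (fun q u qf => exists x, runK c0 F delta mu sub q u x qf).
Proof.
exists {set behaviour}, behs0, behs_next.
exists (fun q B qf => behaves B None c0 [ffun s => s] q (inr qf)) => q u qf.
have behaves_end r : behaves_at u (size u + 1) c0 (summary_at u (size u + 1) [::]) q r
    <-> behaves (foldl behs_next behs0 u) None c0 [ffun s => s] q r.
  by rewrite summary_at_end /behaves_at addn1 take_size -addn1 letter_at_end.
split.
- case=> x [i [v /exec_runs_to [m /run_decomposesP]]] /(_ (leqnn _)).
  by case=> [/behaves_end // | [q' [m' [_ /behaves_end /behaves_end_stops [] //]]]].
- move/behaves_end/(behaviour_realizedP (leqnn _)) => [m /runs_to_exec [x [i [v ex]]]].
  by exists x, i, v.
Qed.
End MarbleRecognizable.

Lemma nmt_recognizable (Gamma : Type) (k : nat) (Sigma : Type) (nq : nat)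
    (T : nmt Gamma k Sigma nq) :
  dfa_recognizable (fun q u qf => exists x, opsem T q u x qf).
Proof.
elim: T => [A nq0 q0 F delta mu | k' A nq0 nc nq' c0 q0 F Asst IHAsst delta call ret mu].
  have [S [s [d [G RG]]]] := dfa_recognizable_endmarked F delta.
  exists S, s, d, G => q u qf; rewrite -RG /=.
  by split=> [[x [-> Fqf _]] | [<- Fqf]] //; eexists.
have [S [s [d [G RG]]]] := IHAsst.
apply: (@runK_recognizable _ _ _ _ c0 F delta mu _ S s d
  (fun q c t q' => exists p, G (call q c) t p /\ q' = ret q c p)) => q c w q'.
split=> [[y [p [opp ->]]] | [p [/RG [y opp] ->]]]; last by exists y, p.
by exists p; split=> //; apply/RG; exists y.
Qed.

Theorem mainTheorem10 (Sigma Gamma : finType) (k nq : nat)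
    (T : nmt Gamma k Sigma nq) :
  regular (nmt_dom T).
Proof.
have [S [s [d [G RG]]]] := nmt_recognizable T.
apply: (@regular_foldl _ S s d (fun t => exists qf, G (init T) t qf)) => w.
by split=> [[x [qf opT]] | [qf /RG [x opT]]]; [exists qf; apply/RG; exists x | exists x, qf].
Qed.
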